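(* Let $F$ be a dill map with diameter $\delta$ and local rule $f$. (1) If $M,M'\in\mathbb N$ are such that for every $u\in A^*$ and every $j\in\{0,\dots,|u|-1\}$, $d_L(f^*(D_j(u)),f^*(u))\le M+\frac{|f^*(u)|-|f^*(D_j(u))|}{2}$ and $d_L(f^*(D_j(u)),f^*(u))\le M'-\frac{|f^*(u)|-|f^*(D_j(u))|}{2}$, then $F$ is $\frac{M+M'}{\lfloor f\rfloor}$-Lipschitz with respect to $\mathfrak d_L$. (2) If $L>0$ and $x\in A^{\mathbb N}$ satisfies $|f(x_{[i,i+\delta)})|\ge L$ for every $i\in\mathbb N$, then for every $y\in A^{\mathbb N}$, $\mathfrak d_L(F(x),F(y))\le(2\delta-1)\frac{\lceil f\rceil}{L}\mathfrak d_L(x,y)$. In particular, if $\tau$ is a substitution and $x$ satisfies $|\tau(x_i)|\ge L$ for all $i$, then $\mathfrak d_L(\overline\tau(x),\overline\tau(y))\le\frac{\lceil\tau\rceil}{L}\mathfrak d_L(x,y)$ for every $y$. (3) $F$ is $(2\delta-1)\frac{\lceil f\rceil}{\lfloor f\rfloor}$-Lipschitz with respect to $\mathfrak d_L$; in particular every substitution $\tau$ yields a $\frac{\lceil\tau\rceil}{\lfloor\tau\rfloor}$-Lipschitz map $\overline\tau$ with respect to $\mathfrak d_L$.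
   Context: $A$ is a finite alphabet; $u_{[i,j)}=u_i\cdots u_{j-1}$. A dill map with diameter $\delta\ge1$ has local rule $f:A^\delta\to A^+$ and is $F(x)=f(x_{[0,\delta)})f(x_{[1,\delta+1)})\cdots$; $\lfloor f\rfloor=\min_{u\in A^\delta}|f(u)|$, $\lceil f\rceil=\max_{u\in A^\delta}|f(u)|$. $f^*(u)=f(u_{[0,\delta)})\cdots f(u_{[|u|-\delta,|u|)})$ if $|u|\ge\delta$, empty otherwise. $D_j(u)$ is $u$ with the letter at position $j$ deleted. A substitution is a nonerasing morphism $\tau:A^*\to A^*$ (a dill map with $\delta=1$), $\overline\tau(z)=\tau(z_0)\tau(z_1)\cdots$, $\lfloor\tau\rfloor=\min_a|\tau(a)|$, $\lceil\tau\rceil=\max_a|\tau(a)|$. The Levenshtein distance is $d_L(u,v)=\frac{|u|+|v|}{2}-\ell$, $\ell$ the length of a longest common subsequence. The Feldman pseudo-metric is $\mathfrak d_L(x,y)=\limsup_{l\to\infty}d_L(x_{[0,l)},y_{[0,l)})/l$. A map $G$ is $C$-Lipschitz w.r.t. $\mathfrak d_L$ if $\mathfrak d_L(G(x),G(y))\le C\,\mathfrak d_L(x,y)$ for all $x,y$. *)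

From mathcomp Require Import all_boot all_order all_algebra.
From mathcomp Require Import all_classical all_reals all_analysis.
Set Implicit Arguments. Unset Strict Implicit. Unset Printing Implicit Defensive.
Import Order.TTheory GRing.Theory Num.Theory.
Local Open Scope ring_scope.

Definition lcs (A : finType) (u v : seq A) : nat :=
  (\max_(i < (size u).+1 | [exists w : i.-tuple A, subseq w u && subseq w v]) i)%N.

Definition dLev (R : realType) (A : finType) (u v : seq A) : R :=
  ((size u + size v)%:R / 2 - (lcs u v)%:R).

Definition pref (A : Type) (x : nat -> A) (l : nat) : seq A := mkseq x l.

(* Feldman pseudo-metric: limsup_l d_L(x_[0,l), y_[0,l)) / l
   (the sequence lies in [0,1], so the real limsup is the right notion). *)
Definition feldman (R : realType) (A : finType) (x y : nat -> A) : R :=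
  limn_sup (fun l : nat => dLev R (pref x l) (pref y l) / l%:R).

Definition feldman_lipschitz (R : realType) (A : finType)
  (G : (nat -> A) -> (nat -> A)) (C : R) : Prop :=
  forall x y : nat -> A, feldman R (G x) (G y) <= C * feldman R x y.

Definition iwin (A : Type) (delta : nat) (x : nat -> A) (i : nat) : delta.-tuple A :=
  [tuple x (i + k)%N | k < delta].

(* the dill map F(x) = f(x_[0,delta)) f(x_[1,delta+1)) ... ; its n-th letter lies
   in the concatenation of the first n+1 blocks since f is nonerasing. *)
Definition dill (A : Type) (delta : nat) (f : delta.-tuple A -> seq A)
  (x : nat -> A) : nat -> A :=
  fun n => nth (x 0%N) (flatten [seq f (iwin delta x i) | i <- iota 0 n.+1]) n.

Definition fstar (A : Type) (delta : nat) (f : delta.-tuple A -> seq A)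
  (u : seq A) : seq A :=
  match u with
  | [::] => [::]
  | a :: _ =>
    if (delta <= size u)%N then
      flatten [seq f [tuple nth a u (i + k)%N | k < delta]
              | i <- iota 0 (size u - delta).+1]
    else [::]
  end.

Definition del (A : Type) (j : nat) (u : seq A) : seq A := take j u ++ drop j.+1 u.

(* ceil f and floor f (min over the nonempty finite set A^delta when A is
   nonempty; the default value is irrelevant otherwise) *)
Definition fceil (A : finType) (delta : nat) (f : delta.-tuple A -> seq A) : nat :=
  (\max_(u : delta.-tuple A) size (f u))%N.
Definition ffloor (A : finType) (delta : nat) (f : delta.-tuple A -> seq A) : nat :=
  \big[minn/fceil f]_(u : delta.-tuple A) size (f u).

Definition subst_map (A : Type) (tau : A -> seq A) (x : nat -> A) : nat -> A :=
  fun n => nth (x 0%N) (flatten [seq tau (x i) | i <- iota 0 n.+1]) n.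
Definition tceil (A : finType) (tau : A -> seq A) : nat := (\max_(a : A) size (tau a))%N.
Definition tfloor (A : finType) (tau : A -> seq A) : nat :=
  \big[minn/tceil tau]_(a : A) size (tau a).

From mathcomp Require Import all_boot all_order all_algebra.
From mathcomp Require Import all_classical all_reals all_analysis.
From mathcomp Require Import lra zify ring.
Import Order.TTheory GRing.Theory Num.Theory.
Local Open Scope ring_scope.
Set Implicit Arguments. Unset Strict Implicit.

(* Let x_l, y_l be the length-l prefixes of x and y and k = l d_L(x_l, y_l)
   the number of letters of x_l outside a longest common subsequence w.
   Reinserting these k letters into w one at a time, the deletion hypothesis
   puts f^*(x_l) and f^*(y_l) within k (M + M') letters of a common
   subsequence: the bound with M on one side and the one with M' on the other
   make the length terms cancel.  For l = m + delta - 1, f^*(x_l) is the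
   concatenation of the first m blocks of F(x), of total length at least m L,
   so prefixes of F(x) and F(y) of a length N ending in the next block are at
   distance at most (M + M') k + ceil f, and passing to limsups gives the
   factor (M + M') / L.  For (2), deleting position j from u only destroys the
   windows through j, at most delta of them in u and delta - 1 in D_j u, so
   the hypothesis of (1) holds with M = (delta - 1) ceil f and
   M' = delta ceil f.  A substitution is the dill map of diameter 1. *)

Section SubseqFacts.
Variable T : eqType.
Implicit Types s t v : seq T.

Definition mask_and (m1 m2 : bitseq) : bitseq := [seq b.1 && b.2 | b <- zip m1 m2].

Lemma mask_andC m1 m2 : mask_and m1 m2 = mask_and m2 m1.
Proof.
elim: m1 m2 => [|b1 m1 IH] [|b2 m2] //.
by rewrite /mask_and /= andbC -/(mask_and m1 m2) IH.
Qed.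

Lemma subseq_mask_and m1 m2 v : subseq (mask (mask_and m1 m2) v) (mask m1 v).
Proof.
elim: v m1 m2 => [|a v IH] [|b1 m1] [|b2 m2] //=; rewrite ?mask0 ?sub0seq //.
case: b1; case: b2 => /=; rewrite ?eqxx ?IH //.
exact: subseq_trans (IH _ _) (subseq_cons _ _).
Qed.

Lemma count_mask_and m1 m2 : size m1 = size m2 ->
  (count id m1 + count id m2 <= count id (mask_and m1 m2) + size m1)%N.
Proof.
elim: m1 m2 => [|b1 m1 IH] [|b2 m2] //= [/IH].
by rewrite /mask_and /=; case: b1; case: b2 => /=; lia.
Qed.

Lemma subseq_common s1 s2 v : subseq s1 v -> subseq s2 v ->
  exists t, [/\ subseq t s1, subseq t s2 & (size s1 + size s2 <= size t + size v)%N].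
Proof.
move=> /subseqP[m1 sz1 ->] /subseqP[m2 sz2 ->].
have sz12 : size (mask_and m1 m2) = size v by rewrite size_map size_zip sz1 sz2 minnn.
exists (mask (mask_and m1 m2) v); split.
- exact: subseq_mask_and.
- by rewrite mask_andC; exact: subseq_mask_and.
- by rewrite !size_mask // -sz1; apply: count_mask_and; rewrite sz1 sz2.
Qed.

Lemma subseq_cat_split s v1 v2 : subseq s (v1 ++ v2) ->
  exists s1 s2, [/\ s = s1 ++ s2, subseq s1 v1 & subseq s2 v2].
Proof.
move=> /subseqP[m sz ->].
exists (mask (take (size v1) m) v1), (mask (drop (size v1) m) v2).
rewrite -mask_cat ?cat_take_drop ?mask_subseq //.
by rewrite size_takel // sz size_cat leq_addr.
Qed.

Lemma subseq_flatten_map (I : eqType) (h : I -> seq T) (i1 i2 : seq I) :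
  subseq i1 i2 -> subseq (flatten (map h i1)) (flatten (map h i2)).
Proof.
elim: i2 i1 => [|b i2 IH] [|a i1] //=; rewrite ?sub0seq //.
case: eqP => [-> sub|_ sub]; first exact: cat_subseq (subseq_refl _) (IH _ sub).
exact: subseq_trans (IH _ sub) (suffix_subseq _ _).
Qed.

End SubseqFacts.

Lemma size_flatten_map_le (I S : Type) (h : I -> seq S) (c : nat) s :
  (forall i, size (h i) <= c)%N -> (size (flatten (map h s)) <= size s * c)%N.
Proof. by move=> hc; elim: s => [|a s IH] //=; rewrite size_cat mulSn leq_add. Qed.

Lemma size_flatten_map_filter (I S : Type) (h : I -> seq S) (c : nat) (P : pred I) s :
  (forall i, size (h i) <= c)%N ->
  (size (flatten (map h s)) <=
     size (flatten (map h [seq i <- s | P i])) + count (predC P) s * c)%N.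
Proof.
move=> hc; elim: s => [|a s IH] //=; rewrite size_cat.
by case: (P a) => /=; rewrite ?size_cat; have := hc a; lia.
Qed.

Lemma count_uniq_iota_le (P : pred nat) s a k : uniq s ->
  (forall i, P i -> a <= i < a + k)%N -> (count P s <= k)%N.
Proof.
move=> us hP; rewrite -size_filter -(size_iota a k); apply: uniq_leq_size.
  exact: filter_uniq.
by move=> i; rewrite seq.mem_filter mem_iota => /andP[/hP].
Qed.

Lemma nth_del (T : Type) (d : T) j u i : (j < size u)%N ->
  nth d (del j u) i = if (i < j)%N then nth d u i else nth d u i.+1.
Proof.
move=> ju; rewrite /del nth_cat size_takel ?(ltnW ju) //.
by case: ltnP => ij; [rewrite nth_take|rewrite nth_drop; congr nth; lia].
Qed.

Lemma size_del (T : Type) j (u : seq T) : (j < size u)%N -> size (del j u) = (size u).-1.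
Proof. by move=> ju; rewrite /del size_cat size_take size_drop ju; lia. Qed.

Lemma bumpE j i : bump j i = if (j <= i)%N then i.+1 else i.
Proof. by rewrite /bump; case: leqP. Qed.

(* For |u| = m + k, the left side indexes the length-k windows of u avoiding
   position j, and bump j maps onto them the windows of [del j u] that do not
   straddle the deletion point. *)
Lemma filter_iota_bump k m j : (0 < k)%N -> (j < m + k)%N ->
  [seq i <- iota 0 m.+1 | ((i + k <= j) || (j < i))%N] =
  map (bump j) [seq i <- iota 0 m | ((i + k <= j) || (j <= i))%N].
Proof.
move=> k_gt0 jmk; apply: (irr_sorted_eq ltn_trans ltnn).
- exact/sorted_filter/iota_ltn_sorted/ltn_trans.
- rewrite sorted_map; apply: sub_sorted (sorted_filter ltn_trans _ (iota_ltn_sorted 0 m)).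
  by move=> a b /=; rewrite !ltnNge leq_bump2.
move=> i; rewrite seq.mem_filter mem_iota; apply/andP/mapP.
- move=> [keep_i i_lt]; exists (unbump j i).
    by rewrite seq.mem_filter mem_iota /unbump; case: ltnP => /= ji; lia.
  by apply/esym/unbumpK; rewrite inE; apply: contraTneq keep_i => ->; lia.
- move=> [i' /[!(seq.mem_filter, mem_iota)] /andP[keep_i' i'_lt] ->].
  by rewrite bumpE; case: (leqP j i') => ji'; lia.
Qed.

Section LongestCommonSubsequence.
Variable A : finType.
Implicit Types u v w : seq A.

Lemma subseq_leq_lcs w u v : subseq w u -> subseq w v -> (size w <= lcs u v)%N.
Proof.
move=> wu wv; have sw : (size w < (size u).+1)%N by rewrite ltnS size_subseq.
apply: (@leq_trans (Ordinal sw)) => //; rewrite /lcs.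
apply: (leq_bigmax_cond (Ordinal sw) (F := fun i : 'I_(size u).+1 => nat_of_ord i)).
by apply/existsP; exists (in_tuple w); rewrite wu wv.
Qed.

Lemma lcs_subseq u v : exists w, [/\ size w = lcs u v, subseq w u & subseq w v].
Proof.
rewrite /lcs; apply: (big_ind (fun n => exists w, [/\ size w = n, subseq w u & subseq w v])).
- by exists [::]; rewrite !sub0seq.
- move=> _ _ [w1 [<- ? ?]] [w2 [<- ? ?]].
  by case: (leqP (size w1) (size w2)) => _; [exists w2|exists w1].
- by move=> i /existsP[w /andP[wu wv]]; exists w; rewrite size_tuple.
Qed.

Lemma lcs_leql u v : (lcs u v <= size u)%N.
Proof. by have [w [<- wu _]] := lcs_subseq u v; exact: size_subseq. Qed.

Lemma lcs_leqr u v : (lcs u v <= size v)%N.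
Proof. by have [w [<- _ wv]] := lcs_subseq u v; exact: size_subseq. Qed.

Lemma lcsC u v : lcs u v = lcs v u.
Proof.
have [w [ew wu wv]] := lcs_subseq u v; have [w' [ew' wv' wu']] := lcs_subseq v u.
have := subseq_leq_lcs wv wu; have := subseq_leq_lcs wu' wv'; lia.
Qed.

Lemma lcsxx u : lcs u u = size u.
Proof. by apply/eqP; rewrite eqn_leq lcs_leql subseq_leq_lcs. Qed.

Lemma lcs_triangle u v w : (lcs u v + lcs v w <= size v + lcs u w)%N.
Proof.
rewrite lcsC; have [s1 [<- s1v s1u]] := lcs_subseq v u.
have [s2 [<- s2v s2w]] := lcs_subseq v w.
have [t [ts1 ts2 sz]] := subseq_common s1v s2v.
apply: (leq_trans sz); rewrite addnC leq_add2l.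
by apply: subseq_leq_lcs; [exact: subseq_trans s1u|exact: subseq_trans s2w].
Qed.

Lemma lcs_catr u v s : (lcs u v <= lcs u (v ++ s))%N.
Proof.
have [w [<- wu wv]] := lcs_subseq u v; apply: subseq_leq_lcs => //.
exact: subseq_trans wv (prefix_subseq _ _).
Qed.

Lemma lcs_catl u v s : (lcs u v <= lcs (u ++ s) v)%N.
Proof. by rewrite lcsC (lcsC (u ++ s)); exact: lcs_catr. Qed.

Lemma lcs_take u v n : (lcs u v <= lcs u (take n v) + (size v - n))%N.
Proof.
have [w [<- wu]] := lcs_subseq u v.
rewrite -{1}(cat_take_drop n v) => /subseq_cat_split[w1 [w2 [ew w1v w2v]]]; subst w.
rewrite size_cat leq_add //; last by rewrite -size_drop size_subseq.
exact: subseq_leq_lcs (subseq_trans (prefix_subseq _ _) wu) w1v.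
Qed.

End LongestCommonSubsequence.

Section Levenshtein.
Variables (R : realType) (A : finType).
Implicit Types u v w : seq A.

Lemma dLevE u v : dLev R u v = ((size u)%:R + (size v)%:R) / 2 - (lcs u v)%:R.
Proof. by rewrite /dLev natrD. Qed.

Lemma dLev_eq_size u v : size u = size v -> dLev R u v = (size u - lcs u v)%N%:R.
Proof. by move=> e; rewrite dLevE natrB ?e ?lcs_leqr //; lra. Qed.

Lemma dLevC u v : dLev R u v = dLev R v u.
Proof. by rewrite !dLevE lcsC (addrC (size u)%:R). Qed.

Lemma dLevxx u : dLev R u u = 0.
Proof. by rewrite dLevE lcsxx; lra. Qed.

Lemma dLev_triangle u v w : dLev R u w <= dLev R u v + dLev R v w.
Proof. by rewrite !dLevE; have := lcs_triangle u v w; rewrite -(ler_nat R) !natrD; lra. Qed.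

End Levenshtein.

Section DeletionChain.
Variables (R : realType) (A : finType) (phi : seq A -> seq A) (M M' : nat).
Hypothesis dLev_phi_del : forall (u : seq A) (j : nat), (j < size u)%N ->
  dLev R (phi (del j u)) (phi u) <=
    M%:R + ((size (phi u))%:R - (size (phi (del j u)))%:R) / 2 /\
  dLev R (phi (del j u)) (phi u) <=
    M'%:R - ((size (phi u))%:R - (size (phi (del j u)))%:R) / 2.

Lemma subseq_del (w u : seq A) : subseq w u -> (size w < size u)%N ->
  exists2 j, (j < size u)%N & subseq w (del j u).
Proof.
elim: u w => [|a u IH] [|b w] //=.
- by move=> _ _; exists 0%N; rewrite ?sub0seq.
- case: (eqVneq b a) => [-> wu|_ wu] sz; last by exists 0%N; rewrite /del /= ?drop0.
  by have [j ju wd] := IH w wu sz; exists j.+1; rewrite /del /= ?eqxx.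
Qed.

Lemma dLev_phi_subseq k (w u : seq A) : subseq w u -> size u = (size w + k)%N ->
  dLev R (phi w) (phi u) <=
    (k * M)%:R + ((size (phi u))%:R - (size (phi w))%:R) / 2 /\
  dLev R (phi w) (phi u) <=
    (k * M')%:R - ((size (phi u))%:R - (size (phi w))%:R) / 2.
Proof.
elim: k u => [|k IH] u wu sz.
  have -> : w = u by apply/eqP; rewrite -(size_subseq_leqif wu).2 sz addn0.
  by rewrite dLevxx !mul0n subrr mul0r addr0 subr0.
have [j ju wd] := subseq_del wu (ltac:(by rewrite sz addnS ltnS leq_addr)).
have szd : size (del j u) = (size w + k)%N by rewrite size_del // sz addnS.
have [h1 h2] := IH _ wd szd; have [h3 h4] := dLev_phi_del ju.
have := dLev_triangle R (phi w) (phi (del j u)) (phi u).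
by rewrite !mulSn !natrD; split; lra.
Qed.

Lemma lcs_phi_eq_size (u v : seq A) : size u = size v ->
  (size (phi u) <= lcs (phi u) (phi v) + (size u - lcs u v) * (M + M'))%N /\
  (size (phi v) <= lcs (phi u) (phi v) + (size u - lcs u v) * (M + M'))%N.
Proof.
move=> suv; have [w [sw wu wv]] := lcs_subseq u v.
have su : size u = (size w + (size u - lcs u v))%N by rewrite sw subnKC ?lcs_leql.
have sv : size v = (size w + (size u - lcs u v))%N by rewrite -suv.
have [c1 c2] := dLev_phi_subseq wu su; have [c3 c4] := dLev_phi_subseq wv sv.
have := dLev_triangle R (phi u) (phi w) (phi v).
rewrite (dLevC R (phi u) (phi w)) (dLevE R (phi u) (phi v)).
by rewrite -!(ler_nat R) !natrD !mulnDr !natrD; split; lra.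
Qed.

End DeletionChain.

Section LimitSuperior.
Variable R : realType.
Implicit Types u v : nat -> R.

Lemma bounded_fun_le u (b : R) : (forall n, `|u n| <= b) -> bounded_fun u.
Proof.
move=> ub; rewrite /bounded_fun /bounded_near /=; near=> M => n _ /=.
apply: le_trans (ub n) _; near: M; exact: nbhs_pinfty_ge (num_real b).
Unshelve. all: end_near. Qed.

Lemma limn_sup_le u b : bounded_fun u ->
  (forall e, 0 < e -> exists n0, forall n, (n0 <= n)%N -> u n <= b + e) ->
  limn_sup u <= b.
Proof.
move=> bu ub; rewrite limn_supE //; apply/ler_addgt0Pr => e e0.
have [n0 un0] := ub e e0.
apply: (@le_trans _ _ (sups u n0)).
  by apply: ge_inf; [exact: bounded_fun_has_lbound_sups|exists n0].
apply: ge_sup; first by exists (u n0), n0 => /=.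
by move=> _ [n /= n0n <-]; exact: un0.
Qed.

Lemma limn_sup_ub u e : bounded_fun u -> 0 < e ->
  exists n0, forall n, (n0 <= n)%N -> u n <= limn_sup u + e.
Proof.
move=> bu e0; rewrite limn_supE //.
have : inf (range (sups u)) < inf (range (sups u)) + e by rewrite ltrDl.
move=> /inf_lt[]; first by exists (sups u 0%N), 0%N.
move=> _ [n0 _ <-] sup_n0; exists n0 => n n0n; apply: le_trans (ltW sup_n0).
apply: ub_le_sup; last by exists n.
exact/has_ubound_sdrop/bounded_fun_has_ubound.
Qed.

Lemma limn_sup_le_scale u v (K C : R) : bounded_fun u -> bounded_fun v -> 0 <= K ->
  (forall l0, exists N0, forall N, (N0 <= N)%N ->
     exists2 l, (l0 <= l)%N & u N <= K * v l + C / N%:R) ->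
  limn_sup u <= K * limn_sup v.
Proof.
move=> bu bv K0 uv; apply: limn_sup_le => // e e0.
have e'0 : 0 < e / 2 / (K + 1) by rewrite !divr_gt0 // ltr_wpDl.
have [l0 vl0] := limn_sup_ub bv e'0; have [N0 uvN0] := uv l0.
have [N1 N1gt] : exists N1 : nat, `|C| * 2 / e < N1%:R.
  by exists (Num.truncn (`|C| * 2 / e)).+1; exact: truncnS_gt.
exists (maxn N0 N1.+1) => N; rewrite geq_max => /andP[N0N N1N].
have [l l0l uN] := uvN0 N N0N.
have N_gt0 : 0 < N%:R :> R by rewrite ltr0n (leq_trans _ N1N).
have Ke' : K * (e / 2 / (K + 1)) <= e / 2.
  by rewrite mulrA ler_pdivrMr ?ltr_wpDl //; nra.
have CN : C / N%:R <= e / 2.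
  rewrite ler_pdivrMr //; apply: le_trans (ler_norm C) _.
  move: N1gt; rewrite ltr_pdivrMr // => /ltW C2.
  have : N1%:R <= N%:R :> R by rewrite ler_nat ltnW.
  nra.
apply: le_trans uN _; have := ler_wpM2l K0 (vl0 l l0l); rewrite mulrDr; lra.
Qed.

End LimitSuperior.

Section Windows.
Variables (A : finType) (delta : nat) (f : delta.-tuple A -> seq A).

Definition window (d : A) (u : seq A) (i : nat) : delta.-tuple A :=
  [tuple nth d u (i + k) | k < delta].

Lemma window_del d j u i : (j < size u)%N -> ((i + delta <= j) || (j <= i))%N ->
  window d (del j u) i = window d u (bump j i).
Proof.
move=> ju keep_i; apply: eq_mktuple => k; rewrite nth_del // bumpE.
have := ltn_ord k; case: (leqP j i) => ji k_lt.
- by rewrite ifF; [congr nth; lia|apply/negbTE; rewrite -leqNgt; lia].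
- by rewrite ifT //; move: keep_i; lia.
Qed.

Hypothesis delta_gt0 : (0 < delta)%N.

Lemma fstarE d u : fstar f u =
  if (delta <= size u)%N then flatten [seq f (window d u i) | i <- iota 0 (size u - delta).+1]
  else [::].
Proof.
case: u => [|a u]; first by rewrite /=; case: leqP => //; lia.
rewrite /fstar; case: ifP => // du; congr flatten; apply/eq_in_map => i.
rewrite mem_iota add0n => /andP[_ i_lt]; congr f; apply: eq_mktuple => k.
by apply: set_nth_default; have := ltn_ord k; move: du i_lt => /=; lia.
Qed.

Lemma fstar_del_lcs c u j : (forall t, size (f t) <= c)%N -> (j < size u)%N ->
  (size (fstar f u) <= lcs (fstar f (del j u)) (fstar f u) + delta * c)%N /\
  (size (fstar f (del j u)) <= lcs (fstar f (del j u)) (fstar f u) + delta.-1 * c)%N.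
Proof.
move=> fc ju; have d : A by case: u ju => // a.
have szd := size_del ju; set n := size u in ju szd.
have [small|large] := ltnP n.-1 delta.
  have -> : fstar f (del j u) = [::] by rewrite (fstarE d) szd leqNgt small.
  split => //; apply: (leq_trans _ (leq_addl _ _)); rewrite (fstarE d) -/n.
  case: ifP => // dn; apply: leq_trans (size_flatten_map_le _ (fun i => fc (window d u i))) _.
  by rewrite size_iota leq_mul2r; apply/orP; right; lia.
set m := (n - delta)%N.
set common := flatten [seq f (window d u i)
  | i <- [seq i <- iota 0 m.+1 | ((i + delta <= j) || (j < i))%N]].
have fu : fstar f u = flatten [seq f (window d u i) | i <- iota 0 m.+1].
  by rewrite (fstarE d) ifT //; lia.
have fdu : fstar f (del j u) = flatten [seq f (window d (del j u) i) | i <- iota 0 m].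
  by rewrite (fstarE d) szd ifT //; congr flatten; congr map; congr iota; rewrite /m; lia.
have common_del : common = flatten [seq f (window d (del j u) i)
    | i <- [seq i <- iota 0 m | ((i + delta <= j) || (j <= i))%N]].
  rewrite /common filter_iota_bump //; last by rewrite /m; lia.
  rewrite -map_comp; congr flatten; apply/eq_in_map => i.
  by rewrite seq.mem_filter => /andP[keep_i _] /=; rewrite window_del.
have lcs_common : (size common <= lcs (fstar f (del j u)) (fstar f u))%N.
  apply: subseq_leq_lcs.
  - by rewrite common_del fdu; apply/subseq_flatten_map/filter_subseq.
  - by rewrite fu; apply/subseq_flatten_map/filter_subseq.
split.
- rewrite {1}fu; apply: leq_trans (size_flatten_map_filter
    (fun i => (i + delta <= j) || (j < i))%N _ (fun i => fc (window d u i))) _.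
  rewrite -/common leq_add // leq_mul2r; apply/orP; right.
  by apply: (count_uniq_iota_le (a := j.+1 - delta)) => [|i /= /negP]; [exact: iota_uniq|lia].
- rewrite {1}fdu; apply: leq_trans (size_flatten_map_filter
    (fun i => (i + delta <= j) || (j <= i))%N _ (fun i => fc (window d (del j u) i))) _.
  rewrite -common_del leq_add // leq_mul2r; apply/orP; right.
  by apply: (count_uniq_iota_le (a := j.+1 - delta)) => [|i /= /negP]; [exact: iota_uniq|lia].
Qed.

End Windows.

Lemma size_pref (T : Type) (x : nat -> T) n : size (pref x n) = n.
Proof. exact: size_mkseq. Qed.

Lemma pref_take (T : Type) (x : nat -> T) n N : (n <= N)%N -> pref x n = take n (pref x N).
Proof. by move=> nN; rewrite /pref /mkseq -map_take take_iota; congr map; congr iota; lia. Qed.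

Section FeldmanSequence.
Variables (R : realType) (A : finType).

Lemma dLev_pref_div_bound (x y : nat -> A) N :
  0 <= dLev R (pref x N) (pref y N) / N%:R <= 1.
Proof.
rewrite dLev_eq_size ?size_pref //; case: N => [|N]; first by rewrite invr0 mulr0 lexx ler01.
by rewrite divr_ge0 //= ler_pdivrMr ?ltr0n // mul1r ler_nat leq_subr.
Qed.

Lemma bounded_dLev_pref (x y : nat -> A) :
  bounded_fun (fun N => dLev R (pref x N) (pref y N) / N%:R).
Proof.
apply: (@bounded_fun_le _ _ 1) => N; have /andP[ge0 le1] := dLev_pref_div_bound x y N.
by rewrite ger0_norm.
Qed.

End FeldmanSequence.

Section DillBlocks.
Variables (A : finType) (delta : nat) (f : delta.-tuple A -> seq A).

Definition dill_blocks (x : nat -> A) (m : nat) : seq A :=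
  flatten [seq f (iwin delta x i) | i <- iota 0 m].

Lemma dill_blocksD x m k : dill_blocks x (m + k) =
  dill_blocks x m ++ flatten [seq f (iwin delta x i) | i <- iota m k].
Proof. by rewrite /dill_blocks iotaD map_cat flatten_cat. Qed.

Lemma size_dill_blocksS x m :
  size (dill_blocks x m.+1) = (size (dill_blocks x m) + size (f (iwin delta x m)))%N.
Proof. by rewrite -addn1 dill_blocksD size_cat /= cats0. Qed.

Lemma size_dill_blocks_le c x m : (forall t, size (f t) <= c)%N ->
  (size (dill_blocks x m) <= m * c)%N.
Proof.
move=> fc; have := size_flatten_map_le (iota 0 m) (fun i => fc (iwin delta x i)).
by rewrite size_iota.
Qed.

Lemma fstar_pref (delta_gt0 : (0 < delta)%N) x m :
  fstar f (pref x (m + delta.-1)) = dill_blocks x m.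
Proof.
rewrite (fstarE f delta_gt0 (x 0%N)) size_pref.
case: m => [|m]; first by rewrite add0n ifF //; apply/negbTE; rewrite -ltnNge; lia.
rewrite ifT; last lia.
have -> : ((m.+1 + delta.-1 - delta).+1 = m.+1)%N by lia.
congr flatten; apply/eq_in_map => i; rewrite mem_iota add0n => /andP[_ i_lt].
by congr f; apply: eq_mktuple => k; rewrite nth_mkseq //; have := ltn_ord k; lia.
Qed.

Hypothesis size_f_gt0 : forall t, (0 < size (f t))%N.

Lemma leq_size_dill_blocks x m : (m <= size (dill_blocks x m))%N.
Proof.
elim: m => [|m IH] //; rewrite size_dill_blocksS.
by have := size_f_gt0 (iwin delta x m); lia.
Qed.

Lemma pref_dill x m : pref (dill f x) (size (dill_blocks x m)) = dill_blocks x m.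
Proof.
apply: (@eq_from_nth _ (x 0%N)); first by rewrite size_pref.
move=> n; rewrite size_pref => n_lt; rewrite nth_mkseq // /dill -/(dill_blocks x n.+1).
case: (leqP n.+1 m) => nm.
- rewrite -(subnKC nm) dill_blocksD nth_cat; have := leq_size_dill_blocks x n.+1.
  by case: ltnP => //; lia.
- by rewrite -(subnKC (ltnW nm)) dill_blocksD nth_cat n_lt.
Qed.

Lemma dill_block_index x N :
  exists m, (size (dill_blocks x m) <= N < size (dill_blocks x m.+1))%N.
Proof.
elim: N => [|N [m /andP[lo hi]]]; first by exists 0%N; rewrite size_dill_blocksS /= size_f_gt0.
case: (ltnP N.+1 (size (dill_blocks x m.+1))) => hi'; first by exists m; rewrite hi' andbT; lia.
exists m.+1; rewrite hi' /= size_dill_blocksS.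
by have := size_f_gt0 (iwin delta x m.+1); lia.
Qed.

(* The prefix of F(x) extends dill_blocks x m; that of F(y) either extends or
   truncates dill_blocks y m. *)
Lemma lcs_pref_dill x y m E N :
  (size (dill_blocks x m) <= lcs (dill_blocks x m) (dill_blocks y m) + E)%N ->
  (size (dill_blocks y m) <= lcs (dill_blocks x m) (dill_blocks y m) + E)%N ->
  (size (dill_blocks x m) <= N)%N ->
  (N <= lcs (pref (dill f x) N) (pref (dill f y) N) + E + (N - size (dill_blocks x m)))%N.
Proof.
move=> bx by_ xN; set p := size (dill_blocks x m) in bx xN *.
set q := size (dill_blocks y m) in by_.
have ex : pref (dill f x) N = dill_blocks x m ++ drop p (pref (dill f x) N).
  by rewrite -{1}(pref_dill x m) (pref_take _ xN) cat_take_drop.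
have lx := lcs_catl (dill_blocks x m) (pref (dill f y) N) (drop p (pref (dill f x) N)).
rewrite -ex in lx.
have [yN|Ny] := leqP q N.
- have ey : pref (dill f y) N = dill_blocks y m ++ drop q (pref (dill f y) N).
    by rewrite -{1}(pref_dill y m) (pref_take _ yN) cat_take_drop.
  have ly := lcs_catr (dill_blocks x m) (dill_blocks y m) (drop q (pref (dill f y) N)).
  rewrite -ey in ly; lia.
- have ey : pref (dill f y) N = take N (dill_blocks y m).
    by rewrite -[in RHS](pref_dill y m) -pref_take // ltnW.
  have ly := lcs_take (dill_blocks x m) (dill_blocks y m) N.
  rewrite -ey in ly; lia.
Qed.

End DillBlocks.

Lemma leq_fceil (A : finType) delta (f : delta.-tuple A -> seq A) t :
  (size (f t) <= fceil f)%N.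
Proof. exact: leq_bigmax. Qed.

Section DillFeldman.
Variables (R : realType) (A : finType) (delta : nat) (f : delta.-tuple A -> seq A).
Hypothesis delta_gt0 : (0 < delta)%N.
Hypothesis size_f_gt0 : forall t, (0 < size (f t))%N.
Variables M M' : nat.
Hypothesis dLev_fstar_del : forall (u : seq A) (j : nat), (j < size u)%N ->
  dLev R (fstar f (del j u)) (fstar f u) <=
    M%:R + ((size (fstar f u))%:R - (size (fstar f (del j u)))%:R) / 2 /\
  dLev R (fstar f (del j u)) (fstar f u) <=
    M'%:R - ((size (fstar f u))%:R - (size (fstar f (del j u)))%:R) / 2.

Lemma dLev_pref_dill_le x y m N :
  (size (dill_blocks f x m) <= N < size (dill_blocks f x m.+1))%N ->
  dLev R (pref (dill f x) N) (pref (dill f y) N) <=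
    (M + M')%:R * dLev R (pref x (m + delta.-1)) (pref y (m + delta.-1)) + (fceil f)%:R.
Proof.
move=> /andP[lo hi]; set l := (m + delta.-1)%N.
have [bx by_] := lcs_phi_eq_size dLev_fstar_del (etrans (size_pref x l) (esym (size_pref y l))).
rewrite !fstar_pref // size_pref in bx by_.
have := lcs_pref_dill size_f_gt0 bx by_ lo.
move: hi; rewrite size_dill_blocksS; have := leq_fceil f (iwin delta x m).
rewrite !dLev_eq_size ?size_pref // -natrM -natrD ler_nat.
set LN := lcs (pref (dill f x) N) _; set Ll := lcs (pref x l) _.
set p := size (dill_blocks f x m); lia.
Qed.

Section PositiveBlocks.
Variables (L : R) (x : nat -> A).
Hypothesis L_gt0 : 0 < L.
Hypothesis xL : forall i, L <= (size (f (iwin delta x i)))%:R.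

Lemma size_dill_blocks_ge m : m%:R * L <= (size (dill_blocks f x m))%:R.
Proof.
elim: m => [|m IH]; first by rewrite mul0r.
by rewrite size_dill_blocksS natrD -addn1 natrD mulrDl mul1r lerD.
Qed.

Lemma dLev_pref_dill_div_le y m N : (0 < m)%N ->
  (size (dill_blocks f x m) <= N < size (dill_blocks f x m.+1))%N ->
  dLev R (pref (dill f x) N) (pref (dill f y) N) / N%:R <=
    (M + M')%:R / L * (dLev R (pref x (m + delta.-1)) (pref y (m + delta.-1)) / (m + delta.-1)%N%:R)
    + ((M + M')%:R * delta.-1%:R + (fceil f)%:R) / N%:R.
Proof.
move=> m_gt0 /andP[lo hi]; set K := (M + M')%:R; set l := (m + delta.-1)%N.
set Dl := dLev R (pref x l) (pref y l).
have N_gt0 : 0 < N%:R :> R.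
  by rewrite ltr0n; apply: leq_trans (leq_trans m_gt0 (leq_size_dill_blocks size_f_gt0 x m)) lo.
have l_gt0 : 0 < l%:R :> R by rewrite ltr0n; apply: leq_trans m_gt0 (leq_addr _ _).
have DN := dLev_pref_dill_le y (introT andP (conj lo hi)).
have /andP[b_ge0 b_le1] := dLev_pref_div_bound R x y l.
have Dl_eq : Dl = Dl / l%:R * l%:R by rewrite divfK ?gt_eqF.
set b := Dl / l%:R in b_ge0 b_le1 Dl_eq *.
have mL : m%:R <= N%:R / L.
  by rewrite ler_pdivlMr //; apply: le_trans (size_dill_blocks_ge m) _; rewrite ler_nat.
have Kbm : K * b * m%:R <= K / L * b * N%:R.
  have := ler_wpM2l (mulr_ge0 (ler0n R (M + M')) b_ge0) mL; congr (_ <= _); ring.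
have Kbd : K * b * delta.-1%:R <= K * delta.-1%:R.
  by rewrite -mulrA ler_wpM2l // ler_piMl.
have lE : l%:R = m%:R + delta.-1%:R :> R by rewrite natrD.
rewrite ler_pdivrMr // mulrDl divfK ?gt_eqF //.
rewrite -/l -/Dl Dl_eq lE in DN; lra.
Qed.

Lemma feldman_dill_le y : feldman R (dill f x) (dill f y) <= (M + M')%:R / L * feldman R x y.
Proof.
apply: (limn_sup_le_scale (C := (M + M')%:R * delta.-1%:R + (fceil f)%:R)).
- exact: bounded_dLev_pref.
- exact: bounded_dLev_pref.
- by rewrite divr_ge0 // ltW.
move=> l0; exists (l0.+1 * fceil f)%N => N N_ge.
have [m N_in] := dill_block_index size_f_gt0 x N.
have m_gt : (l0 < m)%N.
  have c_gt0 := leq_trans (size_f_gt0 (iwin delta x 0)) (leq_fceil f _).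
  move/andP: N_in => [_ /leq_trans/(_ (size_dill_blocks_le x m.+1 (leq_fceil f)))].
  by move/(leq_ltn_trans N_ge); rewrite ltn_pmul2r.
exists (m + delta.-1)%N; first exact: leq_trans (ltnW m_gt) (leq_addr _ _).
exact: dLev_pref_dill_div_le (leq_ltn_trans (leq0n _) m_gt) N_in.
Qed.

End PositiveBlocks.

End DillFeldman.

Lemma bigmin_leq (I : finType) (F : I -> nat) x i : (\big[minn/x]_j F j <= F i)%N.
Proof.
rewrite unlock; elim: (index_enum I) (mem_index_enum i) => [|a r IH] //=.
rewrite inE => /orP[/eqP <-|/IH]; first exact: geq_minl.
exact: leq_trans (geq_minr _ _).
Qed.

Lemma bigmin_gt0 (I : finType) (F : I -> nat) x :
  (0 < x)%N -> (forall i, 0 < F i)%N -> (0 < \big[minn/x]_i F i)%N.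
Proof.
move=> x_gt0 F_gt0; apply: (big_ind (fun n => 0 < n)%N) => // a b.
by rewrite leq_min => ->.
Qed.

Section Bounds.
Variables (R : realType) (A : finType).

Lemma dLev_fstar_del_le delta (f : delta.-tuple A -> seq A) c : (0 < delta)%N ->
  (forall t, size (f t) <= c)%N -> forall (u : seq A) (j : nat), (j < size u)%N ->
  dLev R (fstar f (del j u)) (fstar f u) <=
    (delta.-1 * c)%:R + ((size (fstar f u))%:R - (size (fstar f (del j u)))%:R) / 2 /\
  dLev R (fstar f (del j u)) (fstar f u) <=
    (delta * c)%:R - ((size (fstar f u))%:R - (size (fstar f (del j u)))%:R) / 2.
Proof.
move=> delta_gt0 fc u j ju; have [lu ldu] := fstar_del_lcs delta_gt0 fc ju.
by rewrite dLevE; move: lu ldu; rewrite -!(ler_nat R) !natrD; split; lra.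
Qed.

Lemma feldman_dill_le_bounded delta (f : delta.-tuple A -> seq A) c :
  (0 < delta)%N -> (forall t, 0 < size (f t))%N -> (forall t, size (f t) <= c)%N ->
  forall L : R, 0 < L -> forall x : nat -> A,
  (forall i, L <= (size (f (iwin delta x i)))%:R) -> forall y : nat -> A,
  feldman R (dill f x) (dill f y) <= (2 * delta - 1)%N%:R * (c%:R / L) * feldman R x y.
Proof.
move=> delta_gt0 f_gt0 fc L L_gt0 x xL y.
have := feldman_dill_le delta_gt0 f_gt0 (dLev_fstar_del_le delta_gt0 fc) L_gt0 xL y.
have -> : (delta.-1 * c + delta * c = (2 * delta - 1) * c)%N.
  by rewrite -mulnDl; congr (_ * _); lia.
by rewrite natrM mulrA.
Qed.

Definition subst_rule (tau : A -> seq A) (t : 1.-tuple A) : seq A := tau (thead t).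

Lemma subst_rule_iwin tau (x : nat -> A) i : subst_rule tau (iwin 1 x i) = tau (x i).
Proof. by rewrite /subst_rule /thead /iwin tnth_mktuple addn0. Qed.

Lemma subst_map_dill tau : subst_map tau = dill (subst_rule tau).
Proof.
apply: boolp.funext => x; apply: boolp.funext => n; rewrite /subst_map /dill.
by congr (nth _ (flatten _) _); apply/eq_map => i; rewrite subst_rule_iwin.
Qed.

Lemma feldman_subst_map_le (tau : A -> seq A) : (forall a, 0 < size (tau a))%N ->
  forall L : R, 0 < L -> forall x : nat -> A, (forall i, L <= (size (tau (x i)))%:R) ->
  forall y : nat -> A,
  feldman R (subst_map tau x) (subst_map tau y) <= (tceil tau)%:R / L * feldman R x y.
Proof.
move=> tau_gt0 L L_gt0 x xL y; rewrite !subst_map_dill.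
have := @feldman_dill_le_bounded 1 (subst_rule tau) (tceil tau) isT (fun t => tau_gt0 _)
  (fun t => leq_bigmax (thead t)) L L_gt0 x _ y.
by rewrite mul1r; apply=> i; rewrite subst_rule_iwin.
Qed.

End Bounds.

Unset Implicit Arguments.

Theorem corollaryc (R : realType) (A : finType) (delta : nat)
  (f : delta.-tuple A -> seq A)
  (hdelta : (0 < delta)%N) (hf : forall u, (0 < size (f u))%N) :
  (* (1) *)
  (forall M M' : nat,
     (forall (u : seq A) (j : nat), (j < size u)%N ->
        dLev R (fstar f (del j u)) (fstar f u) <=
          M%:R + ((size (fstar f u))%:R - (size (fstar f (del j u)))%:R) / 2 /\
        dLev R (fstar f (del j u)) (fstar f u) <=
          M'%:R - ((size (fstar f u))%:R - (size (fstar f (del j u)))%:R) / 2) ->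
     feldman_lipschitz (R := R) (dill f) ((M + M')%:R / (ffloor f)%:R))
  /\
  (* (2) *)
  (forall (L : R), 0 < L ->
     (forall x : nat -> A, (forall i, L <= (size (f (iwin delta x i)))%:R) ->
        forall y : nat -> A,
          feldman R (dill f x) (dill f y) <=
            (2 * delta - 1)%N%:R * ((fceil f)%:R / L) * feldman R x y)
     /\
     (forall (tau : A -> seq A), (forall a, (0 < size (tau a))%N) ->
        forall x : nat -> A, (forall i, L <= (size (tau (x i)))%:R) ->
        forall y : nat -> A,
          feldman R (subst_map tau x) (subst_map tau y) <=
            (tceil tau)%:R / L * feldman R x y))
  /\
  (* (3) *)
  (feldman_lipschitz (R := R) (dill f)
     ((2 * delta - 1)%N%:R * ((fceil f)%:R / (ffloor f)%:R))
   /\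
   forall (tau : A -> seq A), (forall a, (0 < size (tau a))%N) ->
     feldman_lipschitz (R := R) (subst_map tau) ((tceil tau)%:R / (tfloor tau)%:R)).
Proof.
have ffloor_gt0 (x : nat -> A) : 0 < (ffloor f)%:R :> R.
  by rewrite ltr0n bigmin_gt0 // (leq_trans (hf (iwin delta x 0)) (leq_fceil f _)).
have ffloor_le (x : nat -> A) i : (ffloor f)%:R <= (size (f (iwin delta x i)))%:R :> R.
  by rewrite ler_nat bigmin_leq.
have dill_ceil := feldman_dill_le_bounded (R := R) hdelta hf (leq_fceil f).
split; [|split; [|split]].
- by move=> M M' H x y; exact: (feldman_dill_le hdelta hf H (ffloor_gt0 x) (ffloor_le x) y).
- move=> L L_gt0; split=> [x xL y|tau tau_gt0 x xL y].
    exact: (dill_ceil L L_gt0 x xL y).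
  exact: (feldman_subst_map_le tau_gt0 L_gt0 xL y).
- by move=> x y; exact: (dill_ceil _ (ffloor_gt0 x) x (ffloor_le x) y).
- move=> tau tau_gt0 x y; apply: feldman_subst_map_le => [//||i].
    by rewrite ltr0n bigmin_gt0 // (leq_trans (tau_gt0 (x 0%N)) (leq_bigmax _)).
  by rewrite ler_nat bigmin_leq.
Qed.
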